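(* Let $\lambda$ be a real number with $\lambda\neq 0$ and $\lambda\ne -1$, and let $x$ be a real number with $0<|x|<1/|\lambda|$. Then \[ e_{\lambda}(x,\ 1|2)=\frac{1}{1+\lambda}\cdot\frac{1}{x}\int_{0}^{x}\frac{1}{t}\big(e_{\lambda}(t)-1\big)\,dt+\frac{1}{x}\,\frac{\lambda}{(1+\lambda)^{2}}\big(e_{\lambda}(x)-1\big)+\Big(\frac{\lambda}{1+\lambda}\Big)^{2}e_{\lambda}(x). \]
   Context: For nonzero real $\lambda$: $(1)_{0,\lambda}=1$, $(1)_{n,\lambda}=1(1-\lambda)(1-2\lambda)\cdots(1-(n-1)\lambda)$ for $n\ge1$. The degenerate exponential is $e_\lambda(t)=(1+\lambda t)^{1/\lambda}=\sum_{n\ge0}(1)_{n,\lambda}t^n/n!$ for $|\lambda t|<1$. The degenerate polyexponential function is $e_{\lambda}(x,\ \delta|k)=\sum_{n=0}^{\infty}\frac{(1)_{n,\lambda}}{n!\,(n+\delta)^{k}}x^{n}$; in particular $e_\lambda(x,1|2)=\sum_{n\ge0}\frac{(1)_{n,\lambda}}{n!(n+1)^2}x^n$. The integrand $(e_\lambda(t)-1)/t$ is extended continuously at $t=0$. *)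

From Stdlib Require Import Reals.
From Coquelicot Require Import Coquelicot.
Open Scope R_scope.

Fixpoint deg_fall (lam : R) (n : nat) : R :=
  match n with
  | O => 1
  | S m => deg_fall lam m * (1 - INR m * lam)
  end.

(* degenerate exponential e_lambda(t) = (1 + lambda t)^(1/lambda)
   (used for |lambda t| < 1, where 1 + lambda t > 0) *)
Definition deg_exp (lam t : R) : R := Rpower (1 + lam * t) (1 / lam).

Definition deg_polyexp (lam x delta : R) (k : nat) : R :=
  Series (fun n => deg_fall lam n / (INR (Factorial.fact n) * (INR n + delta) ^ k) * x ^ n).

(* integrand (e_lambda(t) - 1)/t, extended continuously at t = 0 by its limit 1 *)
Definition deg_integrand (lam t : R) : R :=
  if Req_EM_T t 0 then 1 else (deg_exp lam t - 1) / t.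

From Stdlib Require Import Reals Lra Lia.
From Coquelicot Require Import Coquelicot.
Open Scope R_scope.

(* Write a_n = (1)_{n,lam} / n!.  Since |(1)_{n,lam}| <= (1)_{n,-|lam|}, whose
   consecutive ratios (1 + n|lam|)/(n+1) tend to |lam|, the series
   g(t) = sum a_n t^n converges for |t| < 1/|lam|.  The recurrence
   (n+1) a_{n+1} = (1 - n lam) a_n gives (1 + lam t) g' = g, so
   g(t) (1 + lam t)^(-1/lam) is constant and g = e_lam on that disk.  Hence
   (e_lam(t) - 1)/t and (1/x) times its integral over [0, x] are the series with
   coefficients a_{n+1} and a_{n+1}/(n+1), and the identity holds coefficientwise:
   after substituting a_{n+1} it becomes
   (1 - n lam)(1 + (n+2) lam) + lam^2 (n+1)^2 = (1 + lam)^2. *)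

Definition deg_coef (lam : R) (n : nat) : R := deg_fall lam n / INR (Factorial.fact n).

Lemma INR_fact_pos (n : nat) : 0 < INR (Factorial.fact n).
Proof. apply lt_0_INR, Factorial.lt_O_fact. Qed.

Lemma deg_coef_0 (lam : R) : deg_coef lam 0 = 1.
Proof. unfold deg_coef; simpl; field. Qed.

Lemma deg_coef_S (lam : R) (n : nat) :
  deg_coef lam (S n) = deg_coef lam n * (1 - INR n * lam) / INR (S n).
Proof.
  unfold deg_coef; simpl deg_fall.
  change (Factorial.fact (S n)) with (S n * Factorial.fact n)%nat.
  rewrite mult_INR.
  pose proof (INR_fact_pos n); pose proof (lt_0_INR (S n) ltac:(lia)).
  field; lra.
Qed.

Lemma CV_radius_le_compat (a b : nat -> R) :
  (forall n, Rabs (a n) <= Rabs (b n)) -> Rbar_le (CV_radius b) (CV_radius a).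
Proof.
  intros Hab.
  refine (is_lub_Rbar_subset _ _ _ _ _ (CV_radius_bounded a) (CV_radius_bounded b)).
  intros r [M HM]; exists M; intros n.
  eapply Rle_trans; [|apply HM].
  rewrite !Rabs_mult; apply Rmult_le_compat_r; [apply Rabs_pos | apply Hab].
Qed.

Lemma deg_fall_opp_pos (mu : R) (n : nat) : 0 <= mu -> 0 < deg_fall (- mu) n.
Proof.
  intros Hmu; induction n as [|n IH]; simpl; [lra|].
  apply Rmult_lt_0_compat; [exact IH|].
  pose proof (pos_INR n); nra.
Qed.

Lemma Rabs_deg_fall_le (lam : R) (n : nat) :
  Rabs (deg_fall lam n) <= deg_fall (- Rabs lam) n.
Proof.
  induction n as [|n IH]; simpl; [rewrite Rabs_R1; lra|].
  rewrite Rabs_mult.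
  apply Rmult_le_compat; [apply Rabs_pos | apply Rabs_pos | exact IH |].
  eapply Rle_trans; [apply Rabs_triang|].
  rewrite Rabs_R1, Rabs_Ropp, Rabs_mult, (Rabs_pos_eq (INR n)) by apply pos_INR.
  lra.
Qed.

Lemma Rabs_deg_coef_le (lam : R) (n : nat) :
  Rabs (deg_coef lam n) <= Rabs (deg_coef (- Rabs lam) n).
Proof.
  pose proof (INR_fact_pos n).
  unfold deg_coef; rewrite !Rabs_div, (Rabs_pos_eq (INR _)) by lra.
  apply Rmult_le_compat_r; [apply Rlt_le, Rinv_0_lt_compat; lra|].
  rewrite (Rabs_pos_eq (deg_fall (- Rabs lam) n)); [apply Rabs_deg_fall_le|].
  apply Rlt_le, deg_fall_opp_pos, Rabs_pos.
Qed.

Lemma is_lim_seq_inv_S : is_lim_seq (fun n => / INR (S n)) 0.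
Proof.
  apply (is_lim_seq_inv (fun n => INR (S n)) p_infty); [|discriminate].
  apply -> is_lim_seq_incr_1; apply is_lim_seq_INR.
Qed.

Lemma CV_radius_deg_coef_opp (mu : R) : 0 < mu -> CV_radius (deg_coef (- mu)) = / mu.
Proof.
  intros Hmu.
  assert (Hpos : forall n, 0 < deg_coef (- mu) n).
  { intros n; apply Rdiv_lt_0_compat; [apply deg_fall_opp_pos; lra | apply INR_fact_pos]. }
  apply CV_radius_finite_DAlembert; [intros n; apply Rgt_not_eq, Hpos | exact Hmu |].
  apply is_lim_seq_ext with (fun n => mu + (1 - mu) * / INR (S n)).
  { intros n.
    rewrite Rabs_pos_eq by (apply Rlt_le, Rdiv_lt_0_compat; apply Hpos).
    rewrite deg_coef_S, S_INR.
    pose proof (Hpos n); pose proof (pos_INR n).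
    field; lra. }
  pose proof (is_lim_seq_plus' _ _ mu ((1 - mu) * 0) (is_lim_seq_const mu)
    (is_lim_seq_scal_l _ (1 - mu) 0 is_lim_seq_inv_S)) as Hlim.
  rewrite Rmult_0_r, Rplus_0_r in Hlim; exact Hlim.
Qed.

Lemma deg_coef_inside_radius (lam t : R) :
  lam <> 0 -> Rabs t < 1 / Rabs lam -> Rbar_lt (Rabs t) (CV_radius (deg_coef lam)).
Proof.
  intros Hlam Ht.
  eapply Rbar_lt_le_trans; [|apply CV_radius_le_compat, Rabs_deg_coef_le].
  rewrite CV_radius_deg_coef_opp by (apply Rabs_pos_lt, Hlam).
  simpl; lra.
Qed.

Lemma deg_exp_base_pos (lam t : R) :
  lam <> 0 -> Rabs t < 1 / Rabs lam -> 0 < 1 + lam * t.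
Proof.
  intros Hlam Ht.
  pose proof (Rabs_pos_lt _ Hlam) as Hpos.
  assert (Hlt : Rabs (lam * t) < 1).
  { rewrite Rabs_mult.
    apply (Rmult_lt_compat_l (Rabs lam)) in Ht; [|exact Hpos].
    replace (Rabs lam * (1 / Rabs lam)) with 1 in Ht by (field; lra); exact Ht. }
  apply Rabs_lt_between in Hlt; lra.
Qed.

Lemma PS_incr_1_PS_derive (a : nat -> R) (n : nat) :
  PS_incr_1 (PS_derive a) n = INR n * a n.
Proof. destruct n as [|n]; simpl; [unfold zero; simpl; ring | reflexivity]. Qed.

Lemma PS_derive_deg_coef (lam : R) (n : nat) :
  PS_derive (deg_coef lam) n = deg_coef lam n - lam * (INR n * deg_coef lam n).
Proof.
  unfold PS_derive; rewrite deg_coef_S.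
  pose proof (lt_0_INR (S n) ltac:(lia)).
  field; lra.
Qed.

Lemma PSeries_deg_coef_ode (lam t : R) :
  Rbar_lt (Rabs t) (CV_radius (deg_coef lam)) ->
  (1 + lam * t) * PSeries (PS_derive (deg_coef lam)) t = PSeries (deg_coef lam) t.
Proof.
  intros Ht.
  set (a := deg_coef lam).
  assert (Hcoef : forall n,
    PS_derive a n = PS_plus a (PS_scal (- lam) (PS_incr_1 (PS_derive a))) n).
  { intros n; unfold PS_plus, PS_scal, plus, scal; simpl; unfold mult; simpl.
    rewrite PS_incr_1_PS_derive; unfold a; rewrite PS_derive_deg_coef; ring. }
  assert (Hsplit : PSeries (PS_derive a) t
                   = PSeries a t + - lam * (t * PSeries (PS_derive a) t)).
  { rewrite (PSeries_ext _ _ _ Hcoef) at 1.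
    rewrite PSeries_plus, PSeries_scal, PSeries_incr_1; [reflexivity | |].
    - apply CV_radius_inside, Ht.
    - apply ex_pseries_scal; [unfold mult; simpl; ring|].
      apply CV_radius_inside; rewrite CV_radius_incr_1, CV_radius_derive; exact Ht. }
  lra.
Qed.

Lemma is_derive_0_const (f : R -> R) (r x : R) :
  (forall t, Rabs t < r -> is_derive f t 0) -> Rabs x < r -> f x = f 0.
Proof.
  intros Hf Hx.
  destruct (MVT_cor4 f (fun _ => 0) 0 (Rabs x)) with (b := x) as [c [Hc _]].
  - intros c Hc; apply Hf; rewrite Rminus_0_r in Hc; lra.
  - rewrite Rminus_0_r; lra.
  - lra.
Qed.

Lemma is_derive_PSeries_deg_coef_scaled (lam t : R) :
  lam <> 0 -> Rabs t < 1 / Rabs lam ->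
  is_derive (fun s => PSeries (deg_coef lam) s * Rpower (1 + lam * s) (- (1 / lam))) t 0.
Proof.
  intros Hlam Ht.
  pose proof (deg_exp_base_pos lam t Hlam Ht) as Hpos.
  pose proof (deg_coef_inside_radius lam t Hlam Ht) as Hrad.
  set (F := fun s => Rpower (1 + lam * s) (- (1 / lam))).
  assert (HF : is_derive F t (- F t / (1 + lam * t))).
  { unfold F, Rpower; auto_derive; [lra | field; split; lra]. }
  replace 0 with (PSeries (PS_derive (deg_coef lam)) t * F t
                  + PSeries (deg_coef lam) t * (- F t / (1 + lam * t))).
  - apply (is_derive_mult _ F _ _ _ (is_derive_PSeries _ _ Hrad) HF).
    intros; unfold mult; simpl; ring.
  - rewrite <- (PSeries_deg_coef_ode lam t Hrad).
    field; lra.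
Qed.

Lemma deg_exp_PSeries (lam x : R) :
  lam <> 0 -> Rabs x < 1 / Rabs lam -> deg_exp lam x = PSeries (deg_coef lam) x.
Proof.
  intros Hlam Hx.
  set (F := fun s => Rpower (1 + lam * s) (- (1 / lam))).
  assert (HgF : PSeries (deg_coef lam) x * F x = 1).
  { rewrite (is_derive_0_const (fun s => PSeries (deg_coef lam) s * F s) (1 / Rabs lam));
      [| intros t Ht; apply is_derive_PSeries_deg_coef_scaled; assumption | exact Hx].
    unfold F, Rpower.
    rewrite PSeries_0, deg_coef_0, Rmult_0_r, Rplus_0_r, ln_1, Rmult_0_r, exp_0.
    ring. }
  assert (HeF : deg_exp lam x * F x = 1).
  { unfold deg_exp, F; rewrite <- Rpower_plus, Rplus_opp_r.
    apply Rpower_O, deg_exp_base_pos; assumption. }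
  apply (Rmult_eq_reg_r (F x)); [lra |].
  intros HF0; rewrite HF0, Rmult_0_r in HeF; lra.
Qed.

Lemma deg_integrand_PSeries (lam t : R) :
  lam <> 0 -> Rabs t < 1 / Rabs lam ->
  deg_integrand lam t = PSeries (PS_decr_1 (deg_coef lam)) t.
Proof.
  intros Hlam Ht; unfold deg_integrand.
  destruct (Req_EM_T t 0) as [-> | Ht0].
  - rewrite PSeries_0; unfold PS_decr_1; rewrite deg_coef_S, deg_coef_0; simpl; field.
  - rewrite deg_exp_PSeries, PSeries_decr_1, deg_coef_0 by
      (try apply CV_radius_inside, deg_coef_inside_radius; assumption).
    field; exact Ht0.
Qed.

Lemma RInt_deg_integrand (lam x : R) :
  lam <> 0 -> Rabs x < 1 / Rabs lam ->
  RInt (deg_integrand lam) 0 x = PSeries (PS_Int (PS_decr_1 (deg_coef lam))) x.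
Proof.
  intros Hlam Hx.
  rewrite <- RInt_PSeries
    by (rewrite CV_radius_decr_1; apply deg_coef_inside_radius; assumption).
  apply RInt_ext; intros t Ht.
  apply deg_integrand_PSeries; [exact Hlam |].
  pose proof (Rabs_le_between_min_max x 0 t) as Hle.
  rewrite !Rminus_0_r, Rmin_comm, Rmax_comm in Hle.
  apply (Rle_lt_trans _ (Rabs x)); [apply Hle; lra | exact Hx].
Qed.

Lemma PSeries_lin_comb (a b c : nat -> R) (alpha beta gamma x : R) :
  ex_pseries a x -> ex_pseries b x -> ex_pseries c x ->
  PSeries (fun n => alpha * a n + beta * b n + gamma * c n) x
  = alpha * PSeries a x + beta * PSeries b x + gamma * PSeries c x.
Proof.
  intros Ha Hb Hc.
  assert (Hscal : forall (k : R) (d : nat -> R),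
             ex_pseries d x -> ex_pseries (PS_scal k d) x)
    by (intros; apply ex_pseries_scal; [unfold mult; simpl; ring | assumption]).
  rewrite <- !PSeries_scal, <- !PSeries_plus by auto using ex_pseries_plus.
  reflexivity.
Qed.

Lemma deg_polyexp_coef_decomp (lam : R) (n : nat) :
  1 + lam <> 0 ->
  deg_fall lam n / (INR (Factorial.fact n) * (INR n + 1) ^ 2)
  = 1 / (1 + lam) * (deg_coef lam (S n) / INR (S n))
    + lam / (1 + lam) ^ 2 * deg_coef lam (S n)
    + (lam / (1 + lam)) ^ 2 * deg_coef lam n.
Proof.
  intros Hlam.
  rewrite deg_coef_S, S_INR; unfold deg_coef.
  pose proof (INR_fact_pos n); pose proof (pos_INR n).
  field; lra.
Qed.

Theorem lemma2 (lam x : R) (Hl0 : lam <> 0) (Hl1 : lam <> -1)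
  (Hx0 : 0 < Rabs x) (Hx1 : Rabs x < 1 / Rabs lam) :
  deg_polyexp lam x 1 2 =
    1 / (1 + lam) * (1 / x) * RInt (deg_integrand lam) 0 x
    + 1 / x * (lam / (1 + lam) ^ 2) * (deg_exp lam x - 1)
    + (lam / (1 + lam)) ^ 2 * deg_exp lam x.
Proof.
  assert (Hx : x <> 0) by (intros ->; rewrite Rabs_R0 in Hx0; lra).
  assert (Hrad : Rbar_lt (Rabs x) (CV_radius (deg_coef lam)))
    by (apply deg_coef_inside_radius; assumption).
  assert (Hint : 1 / x * RInt (deg_integrand lam) 0 x
                 = PSeries (PS_decr_1 (PS_Int (PS_decr_1 (deg_coef lam)))) x).
  { rewrite RInt_deg_integrand, (PSeries_decr_1_aux (PS_Int _)) by easy.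
    field; exact Hx. }
  assert (Hquot : 1 / x * (deg_exp lam x - 1) = PSeries (PS_decr_1 (deg_coef lam)) x).
  { rewrite <- deg_integrand_PSeries by assumption; unfold deg_integrand.
    destruct (Req_EM_T x 0); [contradiction | field; exact Hx]. }
  transitivity (1 / (1 + lam) * (1 / x * RInt (deg_integrand lam) 0 x)
                + lam / (1 + lam) ^ 2 * (1 / x * (deg_exp lam x - 1))
                + (lam / (1 + lam)) ^ 2 * deg_exp lam x); [| ring].
  rewrite Hint, Hquot, deg_exp_PSeries by assumption.
  rewrite <- PSeries_lin_comb by (apply CV_radius_inside;
    rewrite ?CV_radius_decr_1, ?CV_radius_Int, ?CV_radius_decr_1; exact Hrad).
  apply Series_ext; intros n.
  rewrite deg_polyexp_coef_decomp by lra.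
  reflexivity.
Qed.
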